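(* Assume the linear setting below. For every integer $k\ge0$ and every integer $n$ with $s^k\le n<s^{k+1}$, \[ b_{s^{k+1}-1}\le b_n\le b_{s^k}. \]
   Context: Linear setting: integers $q\ge2$, $r\in\{0,1,\dots,q-1\}$, $p>q+r$; $A=\{d\in\{0,1,\dots,p-1\}: d\equiv r\pmod q\}$, $s=\#A\ge2$, and $h(i)=qi+r$ for $0\le i\le s-1$. For a positive integer $n$ with base-$s$ expansion $n=\sum_{i=0}^k\varepsilon_i s^i$ ($\varepsilon_k\ne0$), $a_n=\sum_{i=0}^k h(\varepsilon_i)p^i$ and $b_n=a_n/n^{\log_s p}$. *)

From Stdlib Require Import Reals Arith List.
Open Scope R_scope.

Definition A_set (q r p : nat) : list nat :=
  filter (fun d => Nat.eqb (d mod q) (r mod q)) (seq 0 p).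
Definition s_of (q r p : nat) : nat := length (A_set q r p).

Definition h (q r i : nat) : nat := (q * i + r)%nat.

(* base-b digits of n, least significant first: [eps_0; ...; eps_k]
   (no leading zeros; fuel n suffices for b >= 2) *)
Fixpoint digits_aux (b fuel n : nat) : list nat :=
  match fuel with
  | O => nil
  | S f => if Nat.eqb n 0 then nil else (n mod b)%nat :: digits_aux b f (n / b)%nat
  end.
Definition digits (b n : nat) : list nat := digits_aux b n n.

Fixpoint eval_digits (g : nat -> nat) (p : nat) (l : list nat) : nat :=
  match l with
  | nil => O
  | e :: l' => (g e + p * eval_digits g p l')%nat
  end.

Definition a_seq (q r p n : nat) : nat :=
  eval_digits (h q r) p (digits (s_of q r p) n).

Definition b_seq (q r p n : nat) : R :=
  INR (a_seq q r p n) /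
  Rpower (INR n) (ln (INR p) / ln (INR (s_of q r p))).

(** Write [a_n = q c(n) + r e(n)], where [c(n)] ([base_change]) reads the
    base-[s] digits of [n] in base [p] and [e(n) = 1 + p + ... + p^k]
    ([digit_weight]) only depends on the number of digits.  With [α = log_s p >= 1], the convexity of [x ↦ x^α] gives
    [c(n) <= n^α] (with equality at [n = s^k]) and
    [(s-1)((n+1)^α - 1) <= (p-1) c(n)], both by induction on the digits; the
    latter, combined with the monotonicity of [((x+1)^α - 1)/x^α], shows that
    [c(n)/n^α] is smallest at [n = s^(k+1) - 1] among [n < s^(k+1)].  Since
    [e(n)/n^α] decreases along the block, both bounds follow. *)

From Stdlib Require Import Reals Arith List Lra Lia Psatz.
Open Scope R_scope.

Lemma Rpower_pos x y : 0 < Rpower x y.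
Proof. apply exp_pos. Qed.

Lemma Rpower_1_l y : Rpower 1 y = 1.
Proof. unfold Rpower. rewrite ln_1, Rmult_0_r. apply exp_0. Qed.

Lemma Rdiv_Rpower_antitone al c x y : 0 <= al -> 0 <= c -> 0 < x <= y ->
  c / Rpower y al <= c / Rpower x al.
Proof.
  intros Hal Hc Hxy. unfold Rdiv. apply Rmult_le_compat_l; [exact Hc|].
  apply Rinv_le_contravar; [apply Rpower_pos|]. apply Rle_Rpower_l; lra.
Qed.

Lemma Rdiv_le_cross a b c d : 0 < b -> 0 < d -> a * d <= c * b -> a / b <= c / d.
Proof.
  intros Hb Hd H. apply Rmult_le_reg_r with (b * d); [nra|].
  replace (a / b * (b * d)) with (a * d) by (field; lra).
  replace (c / d * (b * d)) with (c * b) by (field; lra).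
  exact H.
Qed.

Section RpowerConvexity.
Variable al : R.
Hypothesis al_ge1 : 1 <= al.

Lemma Rpower_chord_slope_le a b a' b' : 0 < a -> a < b -> b <= a' -> a' < b' ->
  (Rpower b al - Rpower a al) * (b' - a') <= (Rpower b' al - Rpower a' al) * (b - a).
Proof.
  intros Ha Hab Hba' Ha'b'.
  assert (Hder : forall c, 0 < c ->
    derivable_pt_lim (fun x => Rpower x al) c (al * Rpower c (al - 1)))
    by (intros; apply derivable_pt_lim_power; lra).
  destruct (MVT_cor2 _ _ a b Hab (fun c Hc => Hder c ltac:(lra))) as [c1 [E1 H1]].
  destruct (MVT_cor2 _ _ a' b' Ha'b' (fun c Hc => Hder c ltac:(lra))) as [c2 [E2 H2]].
  rewrite E1, E2.
  assert (Rpower c1 (al - 1) <= Rpower c2 (al - 1)) by (apply Rle_Rpower_l; lra).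
  assert (al * Rpower c1 (al - 1) <= al * Rpower c2 (al - 1)) by nra.
  assert (0 <= (b - a) * (b' - a')) by nra.
  nra.
Qed.

Lemma Rpower_increment_le x y c : 0 < x -> x <= y -> 0 <= c ->
  Rpower (x + c) al - Rpower x al <= Rpower (y + c) al - Rpower y al.
Proof.
  intros Hx Hxy Hc.
  destruct (Req_dec c 0) as [->|Hc0]; [rewrite !Rplus_0_r; lra|].
  destruct (Req_dec x y) as [->|Hxy0]; [lra|].
  destruct (Rle_lt_dec (x + c) y) as [Hxcy|Hyxc].
  - pose proof (Rpower_chord_slope_le x (x + c) y (y + c) Hx ltac:(lra) Hxcy ltac:(lra)).
    replace (x + c - x) with c in * by ring. replace (y + c - y) with c in * by ring.
    nra.
  - pose proof (Rpower_chord_slope_le x y (x + c) (y + c) Hx ltac:(lra) ltac:(lra) ltac:(lra)).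
    replace (y + c - (x + c)) with (y - x) in * by ring.
    nra.
Qed.

Lemma Rpower_le_chord z x : 1 <= z -> z <= x ->
  (x - 1) * Rpower z al <= (x - z) + (z - 1) * Rpower x al.
Proof.
  intros H1z Hzx.
  destruct (Req_dec z 1) as [->|Hz1]; [rewrite Rpower_1_l; lra|].
  destruct (Req_dec z x) as [->|Hzx']; [lra|].
  pose proof (Rpower_chord_slope_le 1 z z x ltac:(lra) ltac:(lra) ltac:(lra) ltac:(lra)).
  rewrite Rpower_1_l in *. nra.
Qed.

Lemma Rpower_ge_base x : 1 <= x -> x <= Rpower x al.
Proof.
  intros Hx. rewrite <- (Rpower_1 x) at 1 by lra. apply Rle_Rpower; lra.
Qed.

Lemma Rpower_succ_sub1_ratio_antitone x y : 1 <= x -> x <= y ->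
  (Rpower (y + 1) al - 1) * Rpower x al <= (Rpower (x + 1) al - 1) * Rpower y al.
Proof.
  intros H1x Hxy.
  assert (Hscale : forall t, 0 < t ->
    Rpower (t + 1) al - 1 = Rpower t al * (Rpower (/ t + 1) al - Rpower (/ t) al)).
  { intros t Ht. pose proof (Rinv_0_lt_compat t Ht).
    rewrite Rmult_minus_distr_l, !Rpower_mult_distr, Rinv_r, Rpower_1_l by lra.
    f_equal. f_equal. field. lra. }
  rewrite (Hscale x), (Hscale y) by lra.
  pose proof (Rpower_increment_le (/ y) (/ x) 1 ltac:(apply Rinv_0_lt_compat; lra)
    ltac:(apply Rinv_le_contravar; lra) ltac:(lra)).
  pose proof (Rpower_pos x al). pose proof (Rpower_pos y al).
  assert (0 < Rpower x al * Rpower y al) by nra.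
  nra.
Qed.

End RpowerConvexity.

Open Scope nat_scope.

Fixpoint repunit (p k : nat) : nat :=
  match k with O => 1 | S k => 1 + p * repunit p k end.

Lemma repunit_pred_mul p k : 1 <= p -> (p - 1) * repunit p k + 1 = p ^ (k + 1).
Proof.
  intros Hp. induction k as [|k IH]; [simpl; lia|].
  cbn [repunit]. replace (S k + 1) with (S (k + 1)) by lia.
  rewrite Nat.pow_succ_r', <- IH. nia.
Qed.

Lemma eval_digits_h q r p l :
  eval_digits (h q r) p l =
  q * eval_digits (fun e => e) p l + r * eval_digits (fun _ => 1) p l.
Proof. induction l as [|e l IH]; simpl; [lia|]. rewrite IH. unfold h. nia. Qed.

Section Digits.
Variable b : nat.
Hypothesis b_ge2 : 2 <= b.

Lemma digits_aux_fuel f1 f2 n : n <= f1 -> n <= f2 -> digits_aux b f1 n = digits_aux b f2 n.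
Proof.
  revert f2 n. induction f1 as [|f1 IH]; intros [|f2] n H1 H2; simpl;
    try (replace n with 0 by lia; reflexivity).
  destruct (Nat.eqb_spec n 0) as [|Hn]; [reflexivity|].
  assert (n / b < n) by (apply Nat.div_lt; lia).
  f_equal. apply IH; lia.
Qed.

Lemma digits_cons n : 1 <= n -> digits b n = n mod b :: digits b (n / b).
Proof.
  intros Hn. unfold digits. destruct n as [|n]; [lia|]. simpl digits_aux at 1.
  assert (S n / b < S n) by (apply Nat.div_lt; lia).
  f_equal. apply digits_aux_fuel; lia.
Qed.

Lemma eval_digits_digits_add g p m e : e < b -> 1 <= b * m + e ->
  eval_digits g p (digits b (b * m + e)) = g e + p * eval_digits g p (digits b m).
Proof.
  intros He Hn. rewrite digits_cons by exact Hn. simpl.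
  rewrite <- (Nat.div_unique (b * m + e) b m e), <- (Nat.mod_unique (b * m + e) b m e);
    auto.
Qed.

Lemma nat_digit_ind (P : nat -> Prop) : P 0 ->
  (forall m e, e < b -> 1 <= b * m + e -> P m -> P (b * m + e)) -> forall n, P n.
Proof.
  intros P0 Pstep n. induction n as [n IH] using lt_wf_ind.
  destruct (Nat.eq_dec n 0) as [->|Hn]; [exact P0|].
  rewrite (Nat.div_mod n b) by lia.
  apply Pstep; [apply Nat.mod_upper_bound; lia | rewrite <- Nat.div_mod; lia |].
  apply IH, Nat.div_lt; lia.
Qed.

Definition base_change p n := eval_digits (fun e => e) p (digits b n).
Definition digit_weight p n := eval_digits (fun _ => 1) p (digits b n).

Lemma base_change_digit_add p m e : e < b -> 1 <= b * m + e ->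
  base_change p (b * m + e) = e + p * base_change p m.
Proof. apply eval_digits_digits_add. Qed.

Lemma digit_weight_block p k n : b ^ k <= n < b ^ (k + 1) -> digit_weight p n = repunit p k.
Proof.
  revert n. induction k as [|k IH]; intros n Hn.
  - unfold digit_weight. replace n with (b * 0 + n) by lia.
    rewrite eval_digits_digits_add by (simpl in Hn; lia). cbn. lia.
  - pose proof (Nat.div_mod n b ltac:(lia)) as Hdiv.
    pose proof (Nat.mod_upper_bound n b ltac:(lia)).
    pose proof (Nat.pow_nonzero b (S k) ltac:(lia)).
    unfold digit_weight. rewrite Hdiv, eval_digits_digits_add by lia.
    cbn [repunit]. do 2 f_equal. apply IH.
    rewrite Nat.add_1_r in *. rewrite !Nat.pow_succ_r' in *. nia.
Qed.

Lemma base_change_pow p k : base_change p (b ^ k) = p ^ k.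
Proof.
  unfold base_change. induction k as [|k IH].
  - replace (b ^ 0) with (b * 0 + 1) by (simpl; lia).
    rewrite eval_digits_digits_add by lia. cbn. lia.
  - pose proof (Nat.pow_nonzero b k ltac:(lia)).
    rewrite Nat.pow_succ_r', <- (Nat.add_0_r (b * b ^ k)).
    rewrite eval_digits_digits_add, IH by lia. simpl. lia.
Qed.

Lemma base_change_pow_pred p k : base_change p (b ^ (k + 1) - 1) = (b - 1) * repunit p k.
Proof.
  unfold base_change. induction k as [|k IH].
  - replace (b ^ (0 + 1) - 1) with (b * 0 + (b - 1)) by (simpl; lia).
    rewrite eval_digits_digits_add by lia. simpl. lia.
  - pose proof (Nat.pow_nonzero b (k + 1) ltac:(lia)).
    replace (b ^ (S k + 1) - 1) with (b * (b ^ (k + 1) - 1) + (b - 1))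
      by (replace (S k + 1) with (S (k + 1)) by lia; rewrite Nat.pow_succ_r'; nia).
    rewrite eval_digits_digits_add, IH by nia. simpl. nia.
Qed.

End Digits.

Open Scope R_scope.

Section BaseChangeGrowth.
Variables s p : nat.
Hypothesis s_ge2 : (2 <= s)%nat.
Hypothesis s_le_p : (s <= p)%nat.
Let al := ln (INR p) / ln (INR s).

Let INR_s_ge2 : 2 <= INR s.
Proof. apply (le_INR 2). exact s_ge2. Qed.

Let INR_s_le_p : INR s <= INR p.
Proof. apply le_INR. exact s_le_p. Qed.

Let ln_s_pos : 0 < ln (INR s).
Proof. rewrite <- ln_1. apply ln_increasing; lra. Qed.

Lemma growth_exponent_ge1 : 1 <= al.
Proof.
  assert (ln (INR s) <= ln (INR p)).
  { destruct (Rle_lt_or_eq_dec _ _ INR_s_le_p) as [Hlt|Heq]; [|rewrite Heq; lra].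
    left. apply ln_increasing; lra. }
  unfold al. apply Rmult_le_reg_r with (ln (INR s)); [exact ln_s_pos|].
  field_simplify; lra.
Qed.

Lemma Rpower_INR_base : Rpower (INR s) al = INR p.
Proof.
  unfold Rpower, al.
  replace (ln (INR p) / ln (INR s) * ln (INR s)) with (ln (INR p)) by (field; lra).
  apply exp_ln. lra.
Qed.

Lemma Rpower_INR_pow k : Rpower (INR (s ^ k)) al = INR (p ^ k).
Proof.
  induction k as [|k IH]; [apply Rpower_1_l|].
  rewrite !pow_INR in *. simpl.
  rewrite <- Rpower_mult_distr, IH, Rpower_INR_base by (try apply pow_lt; lra).
  reflexivity.
Qed.

Lemma INR_base_change_digit_add m e : (e < s)%nat -> (1 <= s * m + e)%nat ->
  INR (base_change s p (s * m + e)) = INR e + INR p * INR (base_change s p m).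
Proof.
  intros He Hn. rewrite base_change_digit_add by assumption.
  rewrite plus_INR, mult_INR. reflexivity.
Qed.

Lemma base_change_le_Rpower n : (1 <= n)%nat -> INR (base_change s p n) <= Rpower (INR n) al.
Proof.
  pose proof growth_exponent_ge1 as Hal.
  induction n as [|m e He Hn IH] using (nat_digit_ind s s_ge2); [lia|]. intros _.
  rewrite INR_base_change_digit_add by assumption.
  destruct (Nat.eq_dec m 0) as [->|Hm].
  - replace (s * 0 + e)%nat with e by lia. simpl (INR 0). rewrite Rmult_0_r, Rplus_0_r.
    apply Rpower_ge_base; [exact Hal|]. apply (le_INR 1). lia.
  - assert (H1m : 1 <= INR m) by (apply (le_INR 1); lia).
    specialize (IH ltac:(lia)).
    pose proof (pos_INR e).
    pose proof (Rpower_increment_le al Hal 1 (INR s * INR m) (INR e)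
      ltac:(lra) ltac:(nra) ltac:(lra)) as Hinc.
    pose proof (Rpower_ge_base al Hal (1 + INR e) ltac:(lra)).
    rewrite Rpower_1_l, <- Rpower_mult_distr, Rpower_INR_base in Hinc by lra.
    rewrite plus_INR, mult_INR.
    assert (INR p * INR (base_change s p m) <= INR p * Rpower (INR m) al)
      by (apply Rmult_le_compat_l; [apply pos_INR | exact IH]).
    lra.
Qed.

Lemma base_change_lower_bound n :
  (INR s - 1) * (Rpower (INR n + 1) al - 1) <= (INR p - 1) * INR (base_change s p n).
Proof.
  pose proof growth_exponent_ge1 as Hal.
  induction n as [|m e He Hn IH] using (nat_digit_ind s s_ge2).
  { simpl. rewrite Rplus_0_l, Rpower_1_l. lra. }
  rewrite INR_base_change_digit_add, plus_INR, mult_INR by assumption.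
  pose proof (pos_INR m). pose proof (pos_INR e).
  assert (HeR : INR e + 1 <= INR s) by (rewrite <- S_INR; apply le_INR; lia).
  (* convexity moves the increment of size s - 1 - e from e + 1 up to s m + e + 1 *)
  pose proof (Rpower_increment_le al Hal (INR e + 1) (INR s * INR m + INR e + 1)
    (INR s - 1 - INR e) ltac:(lra) ltac:(nra) ltac:(lra)) as Hinc.
  replace (INR e + 1 + (INR s - 1 - INR e)) with (INR s) in Hinc by ring.
  replace (INR s * INR m + INR e + 1 + (INR s - 1 - INR e)) with (INR s * (INR m + 1))
    in Hinc by ring.
  rewrite <- Rpower_mult_distr, Rpower_INR_base in Hinc by lra.
  pose proof (Rpower_le_chord al Hal (INR e + 1) (INR s) ltac:(lra) HeR) as Hchord.
  rewrite Rpower_INR_base in Hchord.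
  nra.
Qed.

Lemma base_change_ratio_pow k :
  INR (base_change s p (s ^ k)) / Rpower (INR (s ^ k)) al = 1.
Proof.
  rewrite base_change_pow, Rpower_INR_pow by exact s_ge2.
  apply Rinv_r. apply not_0_INR, Nat.pow_nonzero. lia.
Qed.

Lemma base_change_ratio_le_1 n : (1 <= n)%nat ->
  INR (base_change s p n) / Rpower (INR n) al <= 1.
Proof.
  intros Hn. rewrite <- (Rdiv_diag (Rpower (INR n) al)) by (apply Rgt_not_eq, Rpower_pos).
  unfold Rdiv. apply Rmult_le_compat_r.
  - left. apply Rinv_0_lt_compat, Rpower_pos.
  - apply base_change_le_Rpower, Hn.
Qed.

Lemma base_change_ratio_min k n : (1 <= n <= s ^ (k + 1) - 1)%nat ->
  INR (base_change s p (s ^ (k + 1) - 1)) / Rpower (INR (s ^ (k + 1) - 1)) al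
  <= INR (base_change s p n) / Rpower (INR n) al.
Proof.
  intros Hn. set (N := (s ^ (k + 1) - 1)%nat).
  pose proof (Nat.pow_nonzero s (k + 1) ltac:(lia)).
  assert (HN1 : INR N + 1 = INR (s ^ (k + 1))) by (unfold N; rewrite <- S_INR; f_equal; lia).
  assert (Hrep : (INR p - 1) * INR (repunit p k) = Rpower (INR N + 1) al - 1).
  { rewrite HN1, Rpower_INR_pow, <- (repunit_pred_mul p k) by lia.
    rewrite plus_INR, mult_INR, minus_INR by lia. simpl. ring. }
  assert (H1n : 1 <= INR n) by (apply (le_INR 1); lia).
  assert (HnN : INR n <= INR N) by (apply le_INR; lia).
  pose proof (Rpower_succ_sub1_ratio_antitone al growth_exponent_ge1 _ _ H1n HnN) as Hanti.
  pose proof (base_change_lower_bound n) as Hlow.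
  pose proof (Rpower_pos (INR n) al). pose proof (Rpower_pos (INR N) al).
  apply Rdiv_le_cross; try assumption.
  unfold N at 1. rewrite base_change_pow_pred, mult_INR, minus_INR by lia. simpl (INR 1).
  apply Rmult_le_reg_l with (INR p - 1); [lra|].
  assert (INR s - 1 >= 0) by lra.
  assert ((INR s - 1) * ((Rpower (INR N + 1) al - 1) * Rpower (INR n) al)
          <= (INR s - 1) * ((Rpower (INR n + 1) al - 1) * Rpower (INR N) al))
    by (apply Rmult_le_compat_l; lra).
  assert ((INR s - 1) * (Rpower (INR n + 1) al - 1) * Rpower (INR N) al
          <= (INR p - 1) * INR (base_change s p n) * Rpower (INR N) al)
    by (apply Rmult_le_compat_r; lra).
  rewrite <- Hrep in *. lra.
Qed.

End BaseChangeGrowth.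

Lemma s_of_le q r p : (s_of q r p <= p)%nat.
Proof.
  unfold s_of, A_set. rewrite <- (length_seq p 0) at 2. apply filter_length_le.
Qed.

Lemma b_seq_block q r p k n :
  let s := s_of q r p in let al := ln (INR p) / ln (INR s) in
  (2 <= s)%nat -> (s ^ k <= n < s ^ (k + 1))%nat ->
  b_seq q r p n = INR q * (INR (base_change s p n) / Rpower (INR n) al)
                  + INR r * INR (repunit p k) / Rpower (INR n) al.
Proof.
  intros s al Hs Hn. unfold b_seq, a_seq. fold s. fold al.
  rewrite eval_digits_h. fold (base_change s p n) (digit_weight s p n).
  rewrite (digit_weight_block s Hs p k n Hn).
  rewrite plus_INR, !mult_INR. field. apply Rgt_not_eq, Rpower_pos.
Qed.

Theorem mainTheorem16 (q r p k n : nat) :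
  (2 <= q)%nat -> (r < q)%nat -> (q + r < p)%nat ->
  (2 <= s_of q r p)%nat ->
  (s_of q r p ^ k <= n < s_of q r p ^ (k + 1))%nat ->
  b_seq q r p (s_of q r p ^ (k + 1) - 1)%nat <= b_seq q r p n
  <= b_seq q r p (s_of q r p ^ k)%nat.
Proof.
  intros _ _ _ Hs Hn.
  pose proof (s_of_le q r p) as Hsp.
  set (s := s_of q r p) in *.
  pose proof (growth_exponent_ge1 s p Hs Hsp) as Hal.
  assert (Hpos : (1 <= s ^ k)%nat) by (pose proof (Nat.pow_nonzero s k); lia).
  assert (Hblock : (s ^ k < s ^ (k + 1))%nat)
    by (rewrite Nat.add_1_r, Nat.pow_succ_r'; nia).
  assert (HS1 : 1 <= INR (s ^ k)) by (apply (le_INR 1); exact Hpos).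
  assert (HnN : INR n <= INR (s ^ (k + 1) - 1)) by (apply le_INR; lia).
  assert (HSn : INR (s ^ k) <= INR n) by (apply le_INR; lia).
  assert (HRr : 0 <= INR r * INR (repunit p k)) by (apply Rmult_le_pos; apply pos_INR).
  rewrite !(b_seq_block q r p k) by (fold s; lia). fold s.
  split; apply Rplus_le_compat.
  - apply Rmult_le_compat_l; [apply pos_INR|].
    apply base_change_ratio_min; [assumption..|lia].
  - apply Rdiv_Rpower_antitone; lra.
  - apply Rmult_le_compat_l; [apply pos_INR|].
    rewrite base_change_ratio_pow by assumption.
    apply base_change_ratio_le_1; [assumption..|lia].
  - apply Rdiv_Rpower_antitone; lra.
Qed.
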